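(* Let $X$ be a finite $T_0$ topological space, $\mathcal V$ a multivector field on $X$ with $X$ invariant, $\mathcal M=\{M_p\mid p\in\mathbb P\}$ a Morse predecomposition of $X$, and $\le$ an admissible preorder on $\mathbb P$. Then for every $\mathbb Q\subset\mathbb P$ the set $M_{\mathbb Q}$ is a saturated isolated invariant set. Moreover, if $\mathbb Q$ is convex with respect to $\le$, then $M_{\mathbb Q}\cap M_r=\emptyset$ for all $r\in\mathbb P\setminus\mathbb Q$.
   Context: Notation: $\operatorname{cl}$ is closure; $A\subset X$ is locally closed if $\operatorname{cl}A\setminus A$ is closed. A multivector field $\mathcal V$ on $X$ is a partition of $X$ into locally closed sets (multivectors); $[x]_{\mathcal V}$ is the multivector containing $x$. A multivector $V$ is critical if $H(\operatorname{cl}V,\operatorname{cl}V\setminus V)$ (relative singular homology) is nontrivial, regular otherwise. $A$ is $\mathcal V$-compatible if it is a union of multivectors; $\langle A\rangle_{\mathcal V}$ is the smallest locally closed $\mathcal V$-compatible set containing $A$. $\Pi_{\mathcal V}(x)=\operatorname{cl}\{x\}\cup[x]_{\mathcal V}$. A solution is a partial map $\gamma:\mathbb Z\nrightarrow X$ with domain an integer interval and $\gamma(t+1)\in\Pi_{\mathcal V}(\gamma(t))$; a path has finite domain; a full solution has domain $\mathbb Z$. $\alpha(\gamma)=\langle\bigcap_{t\le0}\gamma((-\infty,t])\rangle_{\mathcal V}$, $\omega(\gamma)=\langle\bigcap_{t\ge0}\gamma([t,\infty))\rangle_{\mathcal V}$. A full solution is essential unless $\alpha(\gamma)$ or $\omega(\gamma)$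 lies in a single regular multivector; an essential solution in $A$ has image in $A$. $\operatorname{Inv}S$ is the set of $x\in S$ with an essential solution $\gamma$ in $S$, $\gamma(0)=x$; $S$ is invariant if $\operatorname{Inv}S=S$. An invariant $S$ is isolated invariant if there is a closed $N\supset\Pi_{\mathcal V}(S)$ such that every path in $N$ with endpoints in $S$ has image in $S$. A link from $S_1$ to $S_2$ is a full solution with $\alpha(\gamma)\cap S_1\ne\emptyset\ne\omega(\gamma)\cap S_2$. A Morse predecomposition of $X$ is an indexed family $\{M_p\mid p\in\mathbb P\}$ of mutually disjoint isolated invariant subsets such that every essential solution in $X$ is a link from some $M_p$ to some $M_q$. A preorder $\le$ on $\mathbb P$ is admissible if a link from $M_p$ to $M_q$ implies $q\le p$; $\mathbb Q$ is convex w.r.t. $\le$ if $p\le r\le q$, $p,q\in\mathbb Q$ imply $r\in\mathbb Q$. An invariant $T\subset X$ is saturated if every essential solution $\gamma$ in $X$ with $\alpha(\gamma)\cup\omega(\gamma)\subset T$ has $\operatorname{im}\gamma\subset T$. $\mathbb P_C=\{p\mid M_p\cap C\ne\emptyset\}$; $\operatorname{eSol}_{\mathbb Q}(X)$ is the set of essential solutions $\gamma$ in $X$ with $\mathbb P_{\alpha(\gamma)}\cap\mathbb Q\ne\emptyset\ne\mathbb P_{\omega(\gamma)}\cap\mathbb Q$; $M_{\mathbb Q}=\bigcup\{\operatorname{im}\gamma\mid\gamma\in\operatorname{eSol}_{\mathbb Q}(X)\}$. *)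

From HB Require Import structures.
From mathcomp Require Import all_boot all_order all_algebra.
From mathcomp Require Import all_classical all_reals all_analysis.
From mathcomp Require Import Rstruct Rstruct_topology.
From Stdlib Require Rdefinitions.
Notation R := Rdefinitions.R.

Set Implicit Arguments.
Unset Strict Implicit.
Unset Printing Implicit Defensive.

Import Order.TTheory GRing.Theory Num.Theory.
Import numFieldNormedType.Exports.
Local Open Scope classical_set_scope.
Local Open Scope ring_scope.

Definition std_simplex (n : nat) : set 'rV[R]_n.+1 :=
  [set v | (forall i, 0 <= v ord0 i) /\ \sum_i v ord0 i = 1].
Arguments std_simplex : clear implicits.

Section SingularHomology.
Variable T : topologicalType.

Definition sing_simplex (n : nat) (s : 'rV[R]_n.+1 -> T) : Prop :=
  {within std_simplex n, continuous s}.

Definition sing_in (n : nat) (A : set T) (s : 'rV[R]_n.+1 -> T) : Prop :=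
  sing_simplex s /\ s @` std_simplex n `<=` A.

Definition same_simplex (n : nat) (s t : 'rV[R]_n.+1 -> T) : Prop :=
  forall v, std_simplex n v -> s v = t v.

Definition chain (n : nat) := seq (int * ('rV[R]_n.+1 -> T)).

Definition coef (n : nat) (c : chain n) (s : 'rV[R]_n.+1 -> T) : int :=
  \sum_(p <- c) (if `[< same_simplex p.2 s >] then p.1 else 0).

Definition chain_in (n : nat) (A : set T) (c : chain n) : Prop :=
  forall p, List.In p c -> sing_in A p.2.

Definition chain_sub (n : nat) (c d : chain n) : chain n :=
  c ++ [seq (- p.1, p.2) | p <- d].

(* i-th face map R^(n+1) -> R^(n+2) (insert a zero coordinate at i) *)
Definition face (n : nat) (i : 'I_n.+2) (v : 'rV[R]_n.+1) : 'rV[R]_n.+2 :=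
  \row_j (if unlift i j is Some k then v ord0 k else 0).

Definition boundary (n : nat) (c : chain n.+1) : chain n :=
  flatten [seq [seq (((-1) ^+ nat_of_ord i) * p.1, p.2 \o face i)
               | i : 'I_n.+2 <- enum 'I_n.+2]
           | p : int * ('rV[R]_n.+2 -> T) <- c].

(* c vanishes in the relative chain group C_n(A) / C_n(B) *)
Definition null_mod (n : nat) (B : set T) (c : chain n) : Prop :=
  forall s, sing_simplex s -> ~ (s @` std_simplex n `<=` B) -> coef c s = 0.

Definition rel_cycle (n : nat) (B : set T) : chain n -> Prop :=
  match n return chain n -> Prop with
  | 0 => fun _ => True
  | m.+1 => fun c => null_mod B (boundary c)
  end.

Definition rel_boundary (n : nat) (A B : set T) (c : chain n) : Prop :=
  exists d : chain n.+1, chain_in A d /\ null_mod B (chain_sub c (boundary d)).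

Definition rel_homology_nontrivial (A B : set T) : Prop :=
  exists (n : nat) (c : chain n),
    chain_in A c /\ rel_cycle B c /\ ~ rel_boundary A B c.

End SingularHomology.

Section Multivector.
Variable T : topologicalType.

Definition locally_closed (A : set T) : Prop := closed (closure A `\` A).

(* A multivector field is given by x |-> [x]_V, a partition of X into
   locally closed sets. *)
Definition multivector_field (V : T -> set T) : Prop :=
  (forall x, V x x) /\
  (forall x y, V x y -> V y = V x) /\
  (forall x, locally_closed (V x)).

Variable V : T -> set T.

Definition critical (W : set T) : Prop :=
  rel_homology_nontrivial (closure W) (closure W `\` W).

Definition regular (W : set T) : Prop := ~ critical W.

Definition compatible (A : set T) : Prop := forall x, A x -> V x `<=` A.

Definition lc_hull (A : set T) : set T :=
  \bigcap_(B in [set B | locally_closed B /\ compatible B /\ A `<=` B]) B.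

Definition Pi (x : T) : set T := closure [set x] `|` V x.

Definition PiS (S : set T) : set T := \bigcup_(x in S) Pi x.

Definition full_solution (g : int -> T) : Prop :=
  forall t : int, Pi (g t) (g (t + 1)).

Definition alpha (g : int -> T) : set T :=
  lc_hull (\bigcap_(t in [set t : int | t <= 0]) (g @` [set s | s <= t])).

Definition omega (g : int -> T) : set T :=
  lc_hull (\bigcap_(t in [set t : int | 0 <= t]) (g @` [set s | t <= s])).

Definition in_regular_multivector (A : set T) : Prop :=
  exists x, regular (V x) /\ A `<=` V x.

Definition essential (g : int -> T) : Prop :=
  full_solution g /\
  ~ in_regular_multivector (alpha g) /\ ~ in_regular_multivector (omega g).

Definition essential_in (A : set T) (g : int -> T) : Prop :=
  essential g /\ range g `<=` A.

Definition Inv (S : set T) : set T :=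
  [set x | S x /\ exists g, essential_in S g /\ g 0 = x].

Definition is_invariant (S : set T) : Prop := Inv S = S.

Definition path_on (a b : int) (g : int -> T) : Prop :=
  a <= b /\ forall t, a <= t -> t < b -> Pi (g t) (g (t + 1)).

Definition isolated_invariant (S : set T) : Prop :=
  is_invariant S /\
  exists N : set T, closed N /\ PiS S `<=` N /\
    forall (a b : int) (g : int -> T), path_on a b g ->
      (forall t, a <= t -> t <= b -> N (g t)) ->
      S (g a) -> S (g b) ->
      forall t, a <= t -> t <= b -> S (g t).

Definition link (S1 S2 : set T) (g : int -> T) : Prop :=
  full_solution g /\ alpha g `&` S1 !=set0 /\ omega g `&` S2 !=set0.

Definition morse_predecomposition (P : Type) (M : P -> set T) : Prop :=
  (forall p q, p <> q -> M p `&` M q = set0) /\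
  (forall p, isolated_invariant (M p)) /\
  (forall g, essential_in setT g -> exists p q, link (M p) (M q) g).

Definition admissible (P : Type) (M : P -> set T) (le : P -> P -> Prop) : Prop :=
  (forall p, le p p) /\ (forall p q r, le p q -> le q r -> le p r) /\
  (forall p q g, link (M p) (M q) g -> le q p).

Definition saturated (S : set T) : Prop :=
  is_invariant S /\
  forall g, essential_in setT g -> alpha g `|` omega g `<=` S -> range g `<=` S.

Definition PC (P : Type) (M : P -> set T) (C : set T) : set P :=
  [set p | M p `&` C !=set0].

Definition eSol (P : Type) (M : P -> set T) (Q : set P) : set (int -> T) :=
  [set g | essential_in setT g /\ PC M (alpha g) `&` Q !=set0 /\
           PC M (omega g) `&` Q !=set0].

Definition MQ (P : Type) (M : P -> set T) (Q : set P) : set T :=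
  \bigcup_(g in eSol M Q) range g.

End Multivector.

Definition convex_wrt (P : Type) (le : P -> P -> Prop) (Q : set P) : Prop :=
  forall p q r, Q p -> Q q -> le p r -> le r q -> Q r.

From mathcomp Require Import all_boot all_order all_algebra.
From mathcomp Require Import all_classical all_reals all_analysis.
From mathcomp Require Import zify.
Local Open Scope classical_set_scope.

(* Everything rests on gluing: if a path runs from a point of a solution
   g1 in eSol_Q to a point of a solution g2 in eSol_Q, then following g1 up
   to the path, then the path, then g2 gives a full solution with the
   alpha-limit set of g1 and the omega-limit set of g2, hence again a member
   of eSol_Q. This yields isolation (with N = X) and invariance (shift a
   solution through the point). Saturation follows because in a finite space
   every full solution visits some point of its alpha-limit set arbitrarily
   early and some point of its omega-limit set arbitrarily late. For the
   convexity claim, glue a solution of eSol_Q and an essential solution in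
   M_r through a common point, in both orders: this gives links from M_p to
   M_r and from M_r to M_q with p, q in Q, so q <= r <= p forces r in Q. *)

Import Order.TTheory GRing.Theory Num.Theory.

Section Recurrence.
Local Open Scope ring_scope.
Context {T : eqType}.

Definition recurrent_bw (g : int -> T) (x : T) : Prop :=
  forall t, exists2 s, s <= t & g s = x.

Definition recurrent_fw (g : int -> T) (x : T) : Prop :=
  forall t, exists2 s, t <= s & g s = x.

Hypothesis Tfin : finite_set [set: T].

Lemma exists_recurrent_bw (g : int -> T) : exists x, recurrent_bw g x.
Proof.
apply: contrapT => /forallNP no_rec.
have /choice [f gf] : forall x, exists t, forall s, s <= t -> g s <> x.
  move=> x; have /existsNP [t /forall2NP gt] := no_rec x.
  by exists t => s st; case: (gt s).
have [l Tl] := (finite_seqP setT).1 Tfin.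
pose m := \big[Order.min/0]_(x <- l) f x.
apply: (gf (g m) m) => //; apply: ge_bigmin_seq => //.
by have : [set` l] (g m) by rewrite -Tl.
Qed.

Lemma exists_recurrent_fw (g : int -> T) : exists x, recurrent_fw g x.
Proof.
have [x rec_x] := exists_recurrent_bw (fun s => g (- s)); exists x => t.
by have [s st <-] := rec_x (- t); exists (- s); first lia.
Qed.

End Recurrence.

Section LimitSets.
Local Open Scope ring_scope.
Context {T : topologicalType} (V : T -> set T).

Lemma lc_hull_sub (A : set T) : A `<=` lc_hull V A.
Proof. by move=> x Ax B [_ [_ AB]]; exact: AB. Qed.

Lemma recurrent_bw_alpha (g : int -> T) (x : T) :
  recurrent_bw g x -> alpha V g x.
Proof. by move=> rec_x; apply: lc_hull_sub => t _; have [s ? <-] := rec_x t; exists s. Qed.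

Lemma recurrent_fw_omega (g : int -> T) (x : T) :
  recurrent_fw g x -> omega V g x.
Proof. by move=> rec_x; apply: lc_hull_sub => t _; have [s ? <-] := rec_x t; exists s. Qed.

Lemma omega_alpha_reflect (g : int -> T) :
  omega V g = alpha V (fun s => g (- s)).
Proof.
rewrite /alpha /omega; congr lc_hull; apply/seteqP; split=> x gx t /= t_sign.
- have [|s /= ts <-] := gx (- t); first by rewrite /= oppr_ge0.
  by exists (- s); rewrite /= ?opprK //; lia.
- have [|s /= st <-] := gx (- t); first by rewrite /= oppr_le0.
  by exists (- s); rewrite /=; first lia.
Qed.

Lemma alpha_eventually_shift (g h : int -> T) (c t0 : int) :
  (forall s, s <= t0 -> h s = g (s + c)) -> alpha V h = alpha V g.
Proof.
move=> hg; rewrite /alpha; congr lc_hull; apply/seteqP; split=> x tail_x t /= t_le0.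
- have [|s /= le_s <-] := tail_x (Num.min (t - c) (Num.min t0 0)); first by rewrite /=; lia.
  by exists (s + c); rewrite /= ?hg //; lia.
- have [|s /= le_s <-] := tail_x (Num.min (t + c) (Num.min (t0 + c) 0)); first by rewrite /=; lia.
  by exists (s - c); rewrite /= ?hg ?subrK //; lia.
Qed.

Lemma omega_eventually_shift (g h : int -> T) (c t0 : int) :
  (forall s, t0 <= s -> h s = g (s + c)) -> omega V h = omega V g.
Proof.
move=> hg; rewrite !omega_alpha_reflect.
apply: (@alpha_eventually_shift _ _ (- c) (- t0)) => s st0.
by rewrite hg; [congr g; lia | lia].
Qed.

Definition splice (a : int) (g1 g2 : int -> T) : int -> T :=
  fun s => if s <= a then g1 s else g2 s.

Lemma splice_step (a t : int) (g1 g2 : int -> T) :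
  (t < a -> Pi V (g1 t) (g1 (t + 1))) -> (a <= t -> Pi V (g2 t) (g2 (t + 1))) ->
  g1 a = g2 a -> Pi V (splice a g1 g2 t) (splice a g1 g2 (t + 1)).
Proof.
rewrite /splice => step1 step2 g12; have [lt_ta|le_at] := ltP t a.
  by rewrite ltW // (_ : t + 1 <= a); [exact: step1 | lia].
rewrite (_ : (t + 1 <= a) = false); last by lia.
case: ifP => [le_ta|_]; last exact: step2.
have eq_ta : t = a by lia.
by subst t; rewrite g12; exact: step2.
Qed.

Lemma full_solution_splice (a : int) (g1 g2 : int -> T) :
  full_solution V g1 -> full_solution V g2 -> g1 a = g2 a ->
  full_solution V (splice a g1 g2).
Proof. by move=> F1 F2 g12 t; apply: splice_step. Qed.

Lemma alpha_splice (a : int) (g1 g2 : int -> T) :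
  alpha V (splice a g1 g2) = alpha V g1.
Proof. by apply: (@alpha_eventually_shift _ _ 0 a) => s sa; rewrite /splice sa addr0. Qed.

Lemma omega_splice (a : int) (g1 g2 : int -> T) :
  omega V (splice a g1 g2) = omega V g2.
Proof.
apply: (@omega_eventually_shift _ _ 0 (a + 1)) => s sa.
by rewrite /splice addr0 (_ : (s <= a) = false) //; lia.
Qed.

End LimitSets.

Section MorseSets.
Local Open Scope ring_scope.
Context {T : topologicalType} {V : T -> set T} {P : Type} {M : P -> set T}.
Context {Q : set P}.

Lemma eSol_full_solution {g : int -> T} : eSol V M Q g -> full_solution V g.
Proof. by move=> [[[F _] _] _]. Qed.

Lemma range_eSol_MQ {g : int -> T} : eSol V M Q g -> range g `<=` MQ V M Q.
Proof. by move=> Eg _ [t _ <-]; exists g => //; exists t. Qed.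

Lemma eSol_from_limits {g1 g2 h : int -> T} :
  eSol V M Q g1 -> eSol V M Q g2 -> full_solution V h ->
  alpha V h = alpha V g1 -> omega V h = omega V g2 -> eSol V M Q h.
Proof.
move=> [[[_ [A1 _]] _] [Q1 _]] [[[_ [_ O2]] _] [_ Q2]] Fh Ah Oh.
by rewrite /eSol /essential_in /essential /= Ah Oh.
Qed.

Lemma MQ_at {x : T} (a : int) :
  MQ V M Q x -> exists2 g, eSol V M Q g & g a = x.
Proof.
move=> [g Eg [t _ <-]]; exists (fun s => g (s - a + t)); last by rewrite subrr add0r.
have Fg := eSol_full_solution Eg.
apply: (eSol_from_limits Eg Eg).
- by move=> s; rewrite (_ : s + 1 - a + t = s - a + t + 1); [exact: Fg | lia].
- by apply: (@alpha_eventually_shift _ _ _ _ (t - a) 0) => s _; congr g; lia.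
- by apply: (@omega_eventually_shift _ _ _ _ (t - a) 0) => s _; congr g; lia.
Qed.

Lemma MQ_path (a b : int) (g : int -> T) :
  path_on V a b g -> MQ V M Q (g a) -> MQ V M Q (g b) ->
  forall t, a <= t -> t <= b -> MQ V M Q (g t).
Proof.
move=> [le_ab g_steps] /(MQ_at a) [g1 E1 g1a] /(MQ_at b) [g2 E2 g2b].
pose h := splice b g g2.
have h_steps t : a <= t -> Pi V (h t) (h (t + 1)).
  move=> le_at; apply: splice_step; last by rewrite g2b.
  - exact: g_steps.
  - by move=> _; exact: (eSol_full_solution E2 t).
have Fk : full_solution V (splice a g1 h).
  move=> t; apply: splice_step; first by move=> _; exact: (eSol_full_solution E1 t).
  - exact: h_steps.
  - by rewrite /h /splice le_ab g1a.
have Ek : eSol V M Q (splice a g1 h).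
  by apply: (eSol_from_limits E1 E2 Fk); rewrite ?alpha_splice // !omega_splice.
move=> t le_at le_tb; apply: (range_eSol_MQ Ek); exists t => //.
rewrite /h /splice le_tb; case: ifP => // le_ta.
by rewrite (_ : t = a) ?g1a //; lia.
Qed.

Lemma MQ_invariant : is_invariant V (MQ V M Q).
Proof.
apply/seteqP; split=> [x [] // | x MQx]; split=> //.
have [g Eg g0] := MQ_at 0 MQx; exists g; split=> //.
by split; [case: Eg => [[]] | exact: range_eSol_MQ].
Qed.

Lemma MQ_isolated_invariant : isolated_invariant V (MQ V M Q).
Proof.
split; first exact: MQ_invariant.
exists setT; split; first exact: closedT.
by split=> // a b g g_path _; exact: MQ_path.
Qed.

Lemma MQ_saturated : finite_set [set: T] -> saturated V (MQ V M Q).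
Proof.
move=> Tfin; split; first exact: MQ_invariant.
move=> g [[Fg _] _] lim_MQ _ [t _ <-].
have [x rec_x] := exists_recurrent_bw Tfin g.
have [y rec_y] := exists_recurrent_fw Tfin g.
have [u le_ut gu] := rec_x t; have [v le_tv gv] := rec_y t.
apply: (@MQ_path u v) => //.
- by split=> [|s _ _]; [exact: le_trans le_tv | exact: Fg].
- by rewrite gu; apply: lim_MQ; left; exact: recurrent_bw_alpha.
- by rewrite gv; apply: lim_MQ; right; exact: recurrent_fw_omega.
Qed.

Lemma convex_MQ_disjoint (le : P -> P -> Prop) (r : P) :
  finite_set [set: T] -> is_invariant V (M r) ->
  (forall p q g, link V (M p) (M q) g -> le q p) ->
  convex_wrt le Q -> ~ Q r -> MQ V M Q `&` M r = set0.
Proof.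
move=> Tfin Mr_inv le_link Q_convex notQr.
apply/seteqP; split=> // x [/(MQ_at 0) [g Eg g0] Mrx].
rewrite -Mr_inv in Mrx; case: Mrx => _ [rho [[[Frho _] Mr_rho] rho0]].
have Fg := eSol_full_solution Eg.
case: Eg => _ [[p [[z [Mpz alpha_z]] Qp]] [q [[w [Mqw omega_w]] Qq]]].
have [y rec_y] := exists_recurrent_fw Tfin rho.
have [y' rec_y'] := exists_recurrent_bw Tfin rho.
have Mry : M r y by have [s _ <-] := rec_y 0; apply: Mr_rho; exists s.
have Mry' : M r y' by have [s _ <-] := rec_y' 0; apply: Mr_rho; exists s.
have le_rp : le r p.
  apply: (le_link _ _ (splice 0 g rho)); split.
    by apply: full_solution_splice; rewrite // g0.
  rewrite alpha_splice omega_splice; split; first by exists z.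
  by exists y; split=> //; exact: recurrent_fw_omega.
have le_qr : le q r.
  apply: (le_link _ _ (splice 0 rho g)); split.
    by apply: full_solution_splice; rewrite // g0.
  rewrite alpha_splice omega_splice; split; last by exists w.
  by exists y'; split=> //; exact: recurrent_bw_alpha.
exact: notQr (Q_convex q p r Qq Qp le_qr le_rp).
Qed.

End MorseSets.

Theorem lemma4p12 (T : topologicalType)
  (Tfin : finite_set (@setT T)) (T0 : kolmogorov_space T)
  (V : T -> set T) (HV : multivector_field V)
  (Xinv : is_invariant V setT)
  (P : Type) (M : P -> set T) (HM : morse_predecomposition V M)
  (le : P -> P -> Prop) (Hle : admissible V M le) :
  forall Q : set P,
    (saturated V (MQ V M Q) /\ isolated_invariant V (MQ V M Q)) /\
    (convex_wrt le Q -> forall r, ~ Q r -> MQ V M Q `&` M r = set0).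
Proof.
move=> Q; split; first by split; [exact: MQ_saturated | exact: MQ_isolated_invariant].
move=> Q_convex r notQr.
have [_ [M_isolated _]] := HM; have [_ [_ le_link]] := Hle.
exact: convex_MQ_disjoint Tfin (M_isolated r).1 le_link Q_convex notQr.
Qed.
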